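(* Let $p\in(0,1)$ and, for each integer $n\ge 1$, let $X_n$ be the maximum weight of a directed path from vertex $1$ to vertex $n$ in the transitive tournament on $\{1,\ldots,n\}$ whose edges carry independent $\mathrm{Bernoulli}(p)$ weights. Put $g(0)=1$ and $g(n)=1+\mathbb{E}[X_n]$ for $n\ge1$, and let $G_p(x)=\sum_{n\ge0}g(n)x^n$. Then, as formal power series in $x$, \[ G_p(x)=1+\frac{x}{(1-x)^2B_p(x)}, \qquad\text{where } B_p(x)=\sum_{n\ge0}(1-p)^{\binom{n+1}{2}}x^n. \]
   Context: The transitive tournament on $\{1,\ldots,n\}$ is the directed graph with vertex set $\{1,\ldots,n\}$ and a directed edge $(i,j)$ for every $1\le i<j\le n$. Each edge $(i,j)$ is given a weight $w(i,j)\in\{0,1\}$. These weights are independent, and each equals $1$ with probability $p$ and $0$ with probability $1-p$. The weight of a directed path is the sum of the weights of its edges. $X_n$ is the maximum weight over all directed paths from $1$ to $n$; the one-vertex path has weight $0$, so $X_1=0$. Binomial coefficients satisfy $\binom{0}{2}=\binom{1}{2}=0$. Because $B_p(x)$ has constant term $1$, it is invertible as a formal power series. *)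

From mathcomp Require Import all_boot all_order all_algebra.
Set Implicit Arguments. Unset Strict Implicit. Unset Printing Implicit Defensive.
Import Order.TTheory GRing.Theory Num.Theory.

Section FPS.
Local Open Scope ring_scope.
Variable R : fieldType.

Definition fps := nat -> R.
Definition fps_one : fps := fun n => if n is 0 then 1 else 0.
Definition fps_X : fps := fun n => if n is 1 then 1 else 0.
Definition fps_add (a b : fps) : fps := fun n => a n + b n.
Definition fps_sub (a b : fps) : fps := fun n => a n - b n.
Definition fps_mul (a b : fps) : fps :=
  fun n => \sum_(k < n.+1) a k * b (n - k)%N.

Fixpoint fps_inv_coefs (a : fps) (n : nat) : seq R :=
  match n with
  | 0 => [:: (a 0%N)^-1]
  | m.+1 => let s := fps_inv_coefs a m in
            rcons s (- (a 0%N)^-1 * \sum_(k < m.+1) a k.+1 * nth 0 s (m - k)%N)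
  end.
Definition fps_inv (a : fps) : fps := fun n => nth 0 (fps_inv_coefs a n) n.
End FPS.

(* Vertices {1,...,n} with n = m.+1 are encoded as 'I_m.+1 (vertex k+1 <-> k);
   vertex 1 is ord0 and vertex n is ord_max. A weight assignment is a boolean
   function on ordered pairs, required to vanish off the edge set {(i,j) | i<j}. *)
Definition weights (m : nat) := {ffun 'I_m.+1 * 'I_m.+1 -> bool}.

Definition valid_weights m (w : weights m) : bool :=
  [forall e : 'I_m.+1 * 'I_m.+1, ~~ (e.1 < e.2)%N ==> ~~ w e].

Definition path_weight m (w : weights m) (s : seq 'I_m.+1) : nat :=
  \sum_(e <- zip s (behead s)) nat_of_bool (w e).

(* the directed path from 1 to n whose set of vertices is {1,n} U A
   (directed paths in the transitive tournament = increasing vertex sequences) *)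
Definition path_of m (A : {set 'I_m.+1}) : seq 'I_m.+1 :=
  [seq i <- enum 'I_m.+1 | (i == ord0) || (i == ord_max) || (i \in A)].

(* X_n for n = m.+1 *)
Definition Xmax m (w : weights m) : nat :=
  \max_(A : {set 'I_m.+1}) path_weight w (path_of A).

Local Open Scope ring_scope.

Definition wprob (R : nzRingType) (p : R) m (w : weights m) : R :=
  \prod_(e : 'I_m.+1 * 'I_m.+1 | (e.1 < e.2)%N) (if w e then p else 1 - p).

(* E[X_n] for n = m.+1 *)
Definition EX (R : nzRingType) (p : R) m : R :=
  \sum_(w : weights m | valid_weights w) wprob p w * (Xmax w)%:R.

Definition gcoef (R : nzRingType) (p : R) (n : nat) : R :=
  if n is m.+1 then 1 + EX p m else 1.

Definition Bcoef (R : nzRingType) (p : R) (n : nat) : R := (1 - p) ^+ 'C(n.+1, 2).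

From mathcomp Require Import all_boot all_order all_algebra zify.
From Stdlib Require Import FunctionalExtensionality.

(* Number the vertices 0, ..., m, let h_j be the maximum weight of a path from
   0 to j, and let l_j be the number of i <= j with h_i = h_j (the plateau of j).
   Revealing the tournament one vertex at a time, h_{j+1} = h_j + 1 exactly when
   an edge from the plateau of j to j+1 has weight 1, which has probability
   1 - q^{l_j} with q = 1 - p; then l_{j+1} = 1, and otherwise l_{j+1} = l_j + 1.
   With u_t = P(l_t = 1) this gives P(l_m = k+1) = u_{m-k} q^{C(k+1,2)}, and
   summing over k yields the renewal equation B(x) U(x) = 1/(1-x). Moreover
   1 + E[h_m] = u_0 + ... + u_m, so G(x) = 1 + x U(x)/(1-x) = 1 + x/((1-x)^2 B(x)).
   All of this is a polynomial identity in p. *)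

Definition nweights := nat -> nat -> bool.

Fixpoint height_seq (w : nweights) (j : nat) : seq nat :=
  if j is j'.+1 then
    rcons (height_seq w j') (\max_(i < j'.+1) (nth 0 (height_seq w j') i + w i j'.+1))
  else [:: 0].

Definition height (w : nweights) (j : nat) : nat := nth 0 (height_seq w j) j.

Section Height.
Variable w : nweights.

Lemma size_height_seq j : size (height_seq w j) = j.+1.
Proof. by elim: j => //= j IH; rewrite size_rcons IH. Qed.

Lemma nth_height_seq j i : i <= j -> nth 0 (height_seq w j) i = height w i.
Proof.
elim: j => [|j IH]; first by rewrite leqn0 => /eqP ->.
rewrite leq_eqVlt => /orP [/eqP -> //|]; rewrite ltnS => hi.
by rewrite /= nth_rcons size_height_seq ltnS hi IH.
Qed.

Lemma heightS j : height w j.+1 = \max_(i < j.+1) (height w i + w i j.+1).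
Proof.
rewrite /height /= nth_rcons size_height_seq ltnn eqxx; apply: eq_bigr => i _.
by rewrite nth_height_seq // -ltnS.
Qed.

Lemma height_step {i j} : i < j -> height w i + w i j <= height w j.
Proof.
case: j => // j hi; rewrite heightS.
exact: (@leq_bigmax _ (fun k : 'I_j.+1 => height w k + w k j.+1) (Ordinal hi)).
Qed.

Lemma height_mono {i j} : i <= j -> height w i <= height w j.
Proof.
move=> hij; rewrite -(subnKC hij); elim: (j - i) => [|k IH]; first by rewrite addn0.
apply: (leq_trans IH); rewrite addnS.
by apply: leq_trans (height_step (ltnSn _)); rewrite leq_addr.
Qed.

Lemma height_argmax j : exists2 i, i < j.+1 & height w j.+1 = height w i + w i j.+1.
Proof.
rewrite heightS.
have [i0 ->] :=
  @eq_bigmax _ (fun i : 'I_j.+1 => height w i + w i j.+1) ltac:(by rewrite card_ord).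
by exists i0.
Qed.

End Height.

Lemma height_seq_local w1 w2 j :
  (forall a b, b <= j -> w1 a b = w2 a b) -> height_seq w1 j = height_seq w2 j.
Proof.
elim: j => [//|j IH] h /=.
rewrite IH; last by move=> a b hb; apply: h; rewrite (leq_trans hb).
by congr rcons; apply: eq_bigr => i _; rewrite h.
Qed.

Definition extend (w : nweights) m (c : {ffun 'I_m.+1 -> bool}) : nweights :=
  fun a b => if b == m.+1 then (a <= m) && c (inord a) else w a b.

Definition climbs (w : nweights) m (c : {ffun 'I_m.+1 -> bool}) : bool :=
  [exists i : 'I_m.+1, (height w i == height w m) && c i].

Definition plateau (w : nweights) j : nat :=
  \sum_(i < j.+1) (height w i == height w j).

Section Extend.
Variables (w : nweights) (m : nat) (c : {ffun 'I_m.+1 -> bool}).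

Lemma height_extend_le i : i <= m -> height (extend w m c) i = height w i.
Proof.
move=> him; rewrite /height (height_seq_local _ w) // => a b hb; rewrite /extend.
by have -> : (b == m.+1) = false by apply/negbTE; rewrite neq_ltn ltnS (leq_trans hb him).
Qed.

Lemma height_extend : height (extend w m c) m.+1 = height w m + climbs w m c.
Proof.
have e (i : 'I_m.+1) : height (extend w m c) i + extend w m c i m.+1 = height w i + c i.
  rewrite height_extend_le; last by rewrite -ltnS.
  by rewrite /extend eqxx -ltnS ltn_ord /= inord_val.
rewrite heightS (eq_bigr _ (fun i _ => e i)); apply/eqP; rewrite eqn_leq; apply/andP; split.
  apply/bigmax_leqP => i _; have him : height w i <= height w m by rewrite height_mono // -ltnS.
  case: (boolP (climbs w m c)) => [_|/existsPn /(_ i)]; first by case: (c i); lia.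
  by rewrite negb_and; case: (c i); rewrite ?orbF ?addn0 ?addn1 // ltn_neqAle => ->.
case: (boolP (climbs w m c)) => [/existsP [i /andP [/eqP hi ci]]|_].
  apply: leq_trans (@leq_bigmax _ (fun i : 'I_m.+1 => height w i + c i) i).
  by rewrite hi ci.
apply: leq_trans (@leq_bigmax _ (fun i : 'I_m.+1 => height w i + c i) ord_max).
by rewrite addn0 leq_addr.
Qed.

Lemma plateau_extend :
  plateau (extend w m c) m.+1 = if climbs w m c then 1 else (plateau w m).+1.
Proof.
rewrite /plateau big_ord_recr /= eqxx addn1 height_extend.
have hle (i : 'I_m.+1) : height (extend w m c) i = height w i.
  by rewrite height_extend_le // -ltnS.
case: (climbs w m c) => /=.
  rewrite big1 // => i _; rewrite hle addn1.
  suff /negbTE -> : height w i != (height w m).+1 by [].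
  by rewrite neq_ltn ltnS height_mono // -ltnS.
by rewrite addn0; congr (_.+1); apply: eq_bigr => i _; rewrite hle.
Qed.

End Extend.

Lemma plateau_gt0 w j : 0 < plateau w j.
Proof. by rewrite /plateau big_ord_recr /= eqxx addn1. Qed.

Lemma plateau_le w j : plateau w j <= j.+1.
Proof.
rewrite -[j.+1]card_ord -sum1_card /plateau.
by apply: leq_sum => i _; apply: leq_b1.
Qed.

Fixpoint seq_weight (w : nweights) (s : seq nat) : nat :=
  if s is a :: t then (if t is b :: _ then w a b + seq_weight w t else 0) else 0.

Section SeqWeight.
Variable w : nweights.

Lemma seq_weight_cons2 a b t : seq_weight w [:: a, b & t] = w a b + seq_weight w (b :: t).
Proof. by []. Qed.

Lemma seq_weight_rcons a s b :
  seq_weight w (rcons (a :: s) b) = seq_weight w (a :: s) + w (last a s) b.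
Proof.
elim: s a => [|c t IH] a; first by rewrite /= addn0.
by rewrite rcons_cons !seq_weight_cons2 IH addnA.
Qed.

Lemma seq_weight_le_height {a s} :
  path ltn a s -> seq_weight w (a :: s) + height w a <= height w (last a s).
Proof.
elim: s a => [//|b t IH] a /andP [hab hp].
have := IH b hp; have := height_step w hab; rewrite seq_weight_cons2 /=; lia.
Qed.

Lemma height_attained j :
  exists s, [/\ path ltn 0 s, last 0 s = j & seq_weight w (0 :: s) = height w j].
Proof.
elim/ltn_ind: j => -[_|j IH]; first by exists [::].
have [i hi e] := height_argmax w j.
have [s [hp hl hw]] := IH i hi.
exists (rcons s j.+1); split.
- by rewrite rcons_path hp hl.
- by rewrite last_rcons.
- by rewrite seq_weight_rcons hl hw e.
Qed.

End SeqWeight.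

Lemma path_ltn_le_last {a s x} : path ltn a s -> x \in a :: s -> x <= last a s.
Proof.
elim: s a x => [|b t IH] a x /=; first by move=> _; rewrite inE => /eqP ->.
case/andP => hab hp; rewrite inE => /orP [/eqP ->|]; last exact: IH.
exact: leq_trans (ltnW hab) (IH b b hp (mem_head _ _)).
Qed.

Definition nat_weights {m} (w : weights m) : nweights :=
  fun a b => (a < b) && (b <= m) && w (inord a, inord b).

Section Paths.
Variables (m : nat) (w : weights m).

Lemma path_weight_cons a t : path (fun i j : 'I_m.+1 => i < j) a t ->
  path_weight w (a :: t) = seq_weight (nat_weights w) (map val (a :: t)).
Proof.
elim: t a => [|b t IH] a /=; first by rewrite /path_weight big_nil.
case/andP => hab hp; rewrite /path_weight big_cons -/(path_weight w _) IH //=.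
by rewrite /nat_weights hab -ltnS ltn_ord !inord_val.
Qed.

Lemma sorted_path_of (A : {set 'I_m.+1}) : sorted ltn (map val (path_of A)).
Proof.
rewrite sorted_map; apply: sorted_filter; first exact: ltn_trans.
by rewrite -sorted_map val_enum_ord iota_ltn_sorted.
Qed.

Lemma path_weight_of (A : {set 'I_m.+1}) :
  path_weight w (path_of A) = seq_weight (nat_weights w) (map val (path_of A)).
Proof.
have := sorted_path_of A; case: (path_of A) => [|a t].
  by rewrite /path_weight big_nil.
by rewrite /= path_map => /path_weight_cons.
Qed.

Lemma path_of_attained (s : seq nat) : path ltn 0 s -> last 0 s = m ->
  map val (path_of [set i : 'I_m.+1 | val i \in s]) = 0 :: s.
Proof.
move=> hp hl.
apply: (irr_sorted_eq ltn_trans ltnn (sorted_path_of _) (hp : sorted ltn (0 :: s))) => k.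
apply/mapP/idP => [[i]|hk].
  rewrite mem_filter => /andP [+ _] ->.
  case/orP => [/orP [/eqP -> | /eqP ->]|]; first exact: mem_head.
    by rewrite /= -hl mem_last.
  by rewrite inE => hi; rewrite inE hi orbT.
have hkm : k < m.+1 by rewrite ltnS -hl (path_ltn_le_last hp hk).
exists (Ordinal hkm) => //; rewrite mem_filter mem_enum andbT inE /=.
move: hk; rewrite inE => /predU1P [hk0|hks]; last by rewrite hks orbT.
by rewrite -val_eqE /= {1}hk0.
Qed.

Lemma Xmax_height : Xmax w = height (nat_weights w) m.
Proof.
apply/eqP; rewrite eqn_leq; apply/andP; split.
  apply/bigmax_leqP => A _; rewrite path_weight_of.
  have := sorted_path_of A; case e: (map val (path_of A)) => [//|a t] /= hp.
  apply: leq_trans (leq_addr (height (nat_weights w) a) _) _.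
  apply: leq_trans (seq_weight_le_height _ hp) (height_mono _ _).
  have : last a t \in map val (path_of A) by rewrite e mem_last.
  by case/mapP => i _ ->; rewrite -ltnS ltn_ord.
have [s [hp hl <-]] := height_attained (nat_weights w) m.
apply: leq_trans (leq_bigmax [set i : 'I_m.+1 | val i \in s]).
by rewrite path_weight_of path_of_attained.
Qed.

End Paths.

Import Order.TTheory GRing.Theory Num.Theory.
Local Open Scope ring_scope.

Notation fps_1subX R := (fps_sub (fps_one R) (fps_X R)).

Section FpsAlgebra.
Context {R : fieldType}.
Implicit Types a b c h : fps R.

Lemma fps_mulC a b : fps_mul a b = fps_mul b a.
Proof.
apply: functional_extensionality => n; rewrite /fps_mul.
rewrite (reindex_inj rev_ord_inj) /=; apply: eq_bigr => i _.
by rewrite subSS subKn 1?mulrC // -ltnS.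
Qed.

Lemma fps_mulA a b c : fps_mul (fps_mul a b) c = fps_mul a (fps_mul b c).
Proof.
apply: functional_extensionality => n; rewrite /fps_mul.
transitivity (\sum_(k < n.+1) \sum_(j < n.+1 | (j <= k)%N) a j * b (k - j)%N * c (n - k)%N).
  apply: eq_bigr => k _; rewrite mulr_suml.
  by rewrite (big_ord_widen n.+1 (fun j => a j * b (k - j)%N * c (n - k)%N)).
rewrite (exchange_big_dep predT) //=; apply: eq_bigr => j _; rewrite mulr_sumr.
transitivity (\sum_(j <= i < n.+1) a j * b (i - j)%N * c (n - i)%N).
  by rewrite big_geq_mkord; apply: eq_bigl => i.
rewrite -{1}(add0n j) big_addn big_mkord subSn; last by rewrite -ltnS.
by apply: eq_bigr => l _; rewrite addnK mulrA addnC subnDA.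
Qed.

Lemma fps_mul_X a n : fps_mul (fps_X R) a n = if n is n'.+1 then a n' else 0.
Proof.
rewrite /fps_mul big_ord_recl /fps_X mul0r add0r; case: n => [|n]; first by rewrite big_ord0.
rewrite big_ord_recl mul1r subn1 big1 ?addr0 // => i _.
by rewrite mul0r.
Qed.

Lemma fps_mul_1subX a n :
  fps_mul (fps_1subX R) a n = if n is n'.+1 then a n - a n' else a 0%N.
Proof.
rewrite /fps_mul /fps_sub /fps_one /fps_X.
case: n => [|n]; first by rewrite big_ord1 subr0 mul1r.
rewrite big_ord_recl /= subr0 mul1r subn0; case: n => [|n].
  by rewrite big_ord1 /= sub0r mulN1r.
rewrite big_ord_recl /= sub0r mulN1r big1 ?addr0 // => i _.
by rewrite /= subrr mul0r.
Qed.

Lemma fps_inv_eq {a h} : a 0%N = 1 ->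
  (forall n, fps_mul a h n = fps_one R n) -> forall n, fps_inv a n = h n.
Proof.
move=> a0 ah.
have coefsE n : fps_inv_coefs a n = mkseq h n.+1.
  elim: n => [|n IH].
    by have := ah 0%N; rewrite /fps_mul big_ord1 a0 mul1r /fps_one /= a0 invr1 subnn => <-.
  rewrite mkseqS -IH /=; congr rcons.
  have := ah n.+1; rewrite /fps_mul big_ord_recl /= a0 mul1r subn0 /fps_one => /eqP.
  rewrite addr_eq0 => /eqP ->; rewrite invr1 mulN1r; congr (- _).
  by apply: eq_bigr => i _; rewrite IH nth_mkseq ?ltnS ?leq_subr.
by move=> n; rewrite /fps_inv coefsE nth_mkseq.
Qed.

End FpsAlgebra.

Lemma prodr_natb (R : comNzRingType) (I : finType) (P : pred I) :
  \prod_i ((P i)%:R : R) = ([forall i, P i])%:R.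
Proof.
case: forallP => [h | /forallP/forallPn [i /negbTE hi]].
  by rewrite big1 // => i _; rewrite h.
by rewrite (bigD1 i) //= hi mul0r.
Qed.

Section Expectation.
Context {R : comNzRingType} (p : R).
Local Notation q := (1 - p).

Definition col_prob {m} (c : {ffun 'I_m.+1 -> bool}) : R :=
  \prod_i (if c i then p else q).

(* The expectation of [h] over the random tournament on 0, ..., m, revealed one
   vertex (with its incoming edges) at a time; see [sum_wprob_expect]. *)
Fixpoint expect m (h : nweights -> R) : R :=
  if m is m'.+1 then
    expect m' (fun w => \sum_(c : {ffun 'I_m'.+1 -> bool}) col_prob c * h (extend w m' c))
  else h (fun _ _ => false).

Lemma eq_expect m h1 h2 : h1 =1 h2 -> expect m h1 = expect m h2.
Proof.
elim: m h1 h2 => [|m IH] h1 h2 e /=; first exact: e.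
by apply: IH => w; apply: eq_bigr => c _; rewrite e.
Qed.

Lemma expectD m h1 h2 : expect m (fun w => h1 w + h2 w) = expect m h1 + expect m h2.
Proof.
elim: m h1 h2 => [|m IH] h1 h2 //=.
rewrite -IH; apply: eq_expect => w; rewrite -big_split /=.
by apply: eq_bigr => c _; rewrite mulrDr.
Qed.

Lemma expectZ m x h : expect m (fun w => x * h w) = x * expect m h.
Proof.
elim: m h => [|m IH] h //=.
rewrite -IH; apply: eq_expect => w; rewrite mulr_sumr.
by apply: eq_bigr => c _; rewrite mulrCA.
Qed.

Lemma sum_col_prob m : \sum_(c : {ffun 'I_m.+1 -> bool}) col_prob c = 1.
Proof.
rewrite /col_prob -(bigA_distr_bigA (fun (i : 'I_m.+1) (b : bool) => if b then p else q)).
by rewrite big1 // => i _; rewrite big_bool /= addrC subrK.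
Qed.

Lemma expect_cst m x : expect m (fun _ => x) = x.
Proof.
elim: m x => [|m IH] x //=.
by rewrite -[RHS](IH x); apply: eq_expect => w; rewrite -mulr_suml sum_col_prob mul1r.
Qed.

Lemma expect_sum m K (h : 'I_K -> nweights -> R) :
  expect m (fun w => \sum_(k < K) h k w) = \sum_(k < K) expect m (h k).
Proof.
elim: K h => [|K IH] h.
  by rewrite big_ord0 -[RHS](expect_cst m); apply: eq_expect => w; rewrite big_ord0.
rewrite big_ord_recr /= -IH -expectD; apply: eq_expect => w.
by rewrite big_ord_recr.
Qed.

Lemma sum_col_prob_avoid m (S : pred 'I_m.+1) :
  \sum_(c : {ffun 'I_m.+1 -> bool}) col_prob c * ([forall i, S i ==> ~~ c i])%:R
  = q ^+ (\sum_i S i)%N.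
Proof.
pose f i (b : bool) := (if b then p else q) * (if S i then (~~ b)%:R else 1).
transitivity (\sum_(c : {ffun 'I_m.+1 -> bool}) \prod_i f i (c i)).
  apply: eq_bigr => c _; rewrite big_split /= -prodr_natb; congr (_ * _).
  by apply: eq_bigr => i _; case: (S i).
rewrite -bigA_distr_bigA /= -prodrXr; apply: eq_bigr => i _.
by rewrite big_bool /f; case: (S i); rewrite /= ?mulr0 ?mulr1 ?add0r // addrC subrK.
Qed.

Lemma sum_col_prob_stall w m :
  \sum_(c : {ffun 'I_m.+1 -> bool}) col_prob c * (~~ climbs w m c)%:R = q ^+ plateau w m.
Proof.
rewrite -sum_col_prob_avoid; apply: eq_bigr => c _; congr (_ * (nat_of_bool _)%:R).
by rewrite negb_exists; apply: eq_forallb => i; rewrite negb_and implybE.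
Qed.

Lemma sum_col_prob_climb w m :
  \sum_(c : {ffun 'I_m.+1 -> bool}) col_prob c * (climbs w m c)%:R = 1 - q ^+ plateau w m.
Proof.
rewrite -sum_col_prob_stall -[X in X - _](sum_col_prob m) -sumrB.
apply: eq_bigr => c _.
by case: (climbs w m c); rewrite ?mulr1 ?mulr0 ?subr0 ?subrr.
Qed.

Definition Eheight m := expect m (fun w => (height w m)%:R).
Definition plateau_prob m k := expect m (fun w => (plateau w m == k)%:R).
Definition renewal_prob t := plateau_prob t 1.

Lemma plateau_prob_succ1 m :
  plateau_prob m.+1 1 = expect m (fun w => 1 - q ^+ plateau w m).
Proof.
rewrite /plateau_prob /=; apply: eq_expect => w; rewrite -sum_col_prob_climb; apply: eq_bigr => c _.
by rewrite plateau_extend; case: (climbs w m c); rewrite //= eqSS eqn0Ngt plateau_gt0.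
Qed.

Lemma plateau_probSS m k : plateau_prob m.+1 k.+2 = q ^+ k.+1 * plateau_prob m k.+1.
Proof.
rewrite /plateau_prob /= -expectZ; apply: eq_expect => w.
transitivity ((plateau w m == k.+1)%:R *
  \sum_(c : {ffun 'I_m.+1 -> bool}) col_prob c * (~~ climbs w m c)%:R).
  rewrite mulr_sumr; apply: eq_bigr => c _; rewrite plateau_extend mulrCA.
  by case: (climbs w m c); rewrite /= ?mulr0 ?mulr1.
rewrite sum_col_prob_stall; case: eqP => [->|_]; first by rewrite mulrC.
by rewrite mul0r mulr0.
Qed.

Lemma plateau_probE m k :
  (k <= m)%N -> plateau_prob m k.+1 = renewal_prob (m - k) * q ^+ 'C(k.+1, 2).
Proof.
elim: m k => [|m IH] [|k] hk //; try by rewrite bin_small // expr0 mulr1 subn0.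
rewrite plateau_probSS IH // subSS [in RHS]binS bin1 exprD mulrCA.
by congr (_ * _); apply: mulrC.
Qed.

Lemma renewal_prob0 : renewal_prob 0 = 1.
Proof. by rewrite /renewal_prob /plateau_prob /= /plateau big_ord1 eqxx. Qed.

Lemma sum_plateau_prob m : \sum_(k < m.+1) plateau_prob m k.+1 = 1.
Proof.
rewrite -expect_sum -[RHS](expect_cst m); apply: eq_expect => w.
have hl : ((plateau w m).-1 < m.+1)%N by rewrite prednK ?plateau_gt0 ?plateau_le.
rewrite (bigD1 (Ordinal hl)) //= prednK ?plateau_gt0 // eqxx big1 ?addr0 // => k hk.
case: eqP => // hlk; case/eqP: hk; apply: val_inj.
by rewrite /= hlk.
Qed.

Lemma renewal_equation m : \sum_(k < m.+1) Bcoef p k * renewal_prob (m - k) = 1.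
Proof.
rewrite -(sum_plateau_prob m); apply: eq_bigr => k _.
by rewrite plateau_probE 1?mulrC // -ltnS.
Qed.

Lemma Eheight_succ m : Eheight m.+1 = Eheight m + renewal_prob m.+1.
Proof.
rewrite /renewal_prob plateau_prob_succ1 /Eheight -expectD /=; apply: eq_expect => w.
rewrite -sum_col_prob_climb -[(height w m)%:R]mul1r.
rewrite -[X in X * (height w m)%:R](sum_col_prob m) mulr_suml -big_split /=.
by apply: eq_bigr => c _; rewrite height_extend natrD mulrDr.
Qed.

Lemma one_add_Eheight m : 1 + Eheight m = \sum_(t < m.+1) renewal_prob t.
Proof.
elim: m => [|m IH]; first by rewrite big_ord1 renewal_prob0 /Eheight /= /height /= addr0.
by rewrite Eheight_succ addrA IH [RHS]big_ord_recr.
Qed.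

End Expectation.

Lemma valid_weights_nonedge {n} {w : weights n} :
  valid_weights w -> forall e : 'I_n.+1 * 'I_n.+1, ~~ (e.1 < e.2)%N -> w e = false.
Proof. by move/forallP => hv e /(implyP (hv e)) /negbTE. Qed.

Lemma wprob_pair (R : comNzRingType) (p : R) n (w : weights n) :
  wprob p w = \prod_(i : 'I_n.+1) \prod_(j : 'I_n.+1 | (i < j)%N) (if w (i, j) then p else 1 - p).
Proof.
rewrite /wprob (pair_big_dep predT (fun i j : 'I_n.+1 => (i < j)%N)
  (fun i j => if w (i, j) then p else 1 - p)).
by apply: eq_big => -[i j].
Qed.

Section Glue.
Variable m : nat.

Lemma val_inord_widen (k : 'I_m.+1) : (inord k : 'I_m.+2) = k :> nat.
Proof. by rewrite inordK // leqW. Qed.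

Lemma inord_widen_neq_max (k : 'I_m.+1) : (inord k : 'I_m.+2) != ord_max.
Proof. by rewrite -val_eqE /= val_inord_widen neq_ltn ltn_ord. Qed.

Lemma inord_narrowK (i : 'I_m.+2) : (i <= m)%N -> inord (inord i : 'I_m.+1) = i.
Proof. by move=> him; apply: val_inj; rewrite /= !inordK // ltnS // leqW. Qed.

(* A weight assignment on m+2 vertices is one on the first m+1 vertices together
   with the column of weights of the edges into the last vertex. *)
Definition glue (x : weights m * {ffun 'I_m.+1 -> bool}) : weights m.+1 :=
  [ffun e : 'I_m.+2 * 'I_m.+2 => if e.2 == ord_max then (e.1 < e.2)%N && x.2 (inord e.1)
     else [&& (e.1 <= m)%N, (e.2 <= m)%N & x.1 (inord e.1, inord e.2)]].

Definition unglue (w : weights m.+1) : weights m * {ffun 'I_m.+1 -> bool} :=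
  ([ffun e : 'I_m.+1 * 'I_m.+1 => w (inord e.1, inord e.2)],
   [ffun i : 'I_m.+1 => w (inord i, ord_max)]).

Lemma glueK : cancel glue unglue.
Proof.
move=> [w c]; congr pair; [apply/ffunP => -[i j] | apply/ffunP => i]; rewrite !ffunE /=.
  by rewrite (negbTE (inord_widen_neq_max _)) !val_inord_widen !leq_ord !inord_val.
by rewrite eqxx val_inord_widen ltn_ord inord_val.
Qed.

Lemma unglueK w : valid_weights w -> glue (unglue w) = w.
Proof.
move=> hv; apply/ffunP => -[i j]; rewrite !ffunE /=.
case: eqP => [->|/eqP hj].
  case: (ltnP i ord_max) => hi /=; first by rewrite inord_narrowK.
  have -> : i = ord_max by apply: val_inj; apply/eqP; rewrite eqn_leq leq_ord hi.
  by rewrite (valid_weights_nonedge hv) //= ltnn.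
have hjm : (j <= m)%N by move: hj; rewrite -val_eqE -ltnS ltn_neqAle leq_ord andbT.
rewrite hjm /=; case: (leqP i m) => hi /=; first by rewrite !inord_narrowK.
by rewrite (valid_weights_nonedge hv) //= -leqNgt (leq_trans hjm (ltnW hi)).
Qed.

Lemma valid_glue x : valid_weights (glue x) = valid_weights x.1.
Proof.
apply/idP/idP => hv; apply/forallP => -[i j]; apply/implyP => /= hij.
  have := valid_weights_nonedge hv ((inord i : 'I_m.+2), (inord j : 'I_m.+2)).
  rewrite /= !val_inord_widen => /(_ hij).
  rewrite ffunE /= (negbTE (inord_widen_neq_max _)) !val_inord_widen !leq_ord /=.
  by rewrite !inord_val => ->.
rewrite ffunE /=; case: (j == ord_max); first by rewrite (negbTE hij).
case: (leqP i m) => hi //=; case: (leqP j m) => hj //=.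
by rewrite (valid_weights_nonedge hv (inord i, inord j)) //= !inordK.
Qed.

Lemma nat_weights_glue x : nat_weights (glue x) = extend (nat_weights x.1) m x.2.
Proof.
apply: functional_extensionality => a; apply: functional_extensionality => b.
rewrite /nat_weights /extend ffunE /=; case: (eqVneq b m.+1) => [->|hb].
  have -> : (inord m.+1 : 'I_m.+2) == ord_max by rewrite -val_eqE /= inordK.
  rewrite leqnn andbT; case: (ltnP a m.+1) => ha /=; last by rewrite leqNgt ha.
  by rewrite !inordK // ltnS ltnW.
case: (leqP b m) => hbm; last first.
  have /negbTE -> : ~~ (b <= m.+1)%N by rewrite -ltnNge ltn_neqAle eq_sym hb hbm.
  by rewrite !andbF.
have /negbTE -> : (inord b : 'I_m.+2) != ord_max by rewrite -val_eqE /= inordK // ltnS leqW.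
case: (ltnP a b) => hab //=; have ham : (a <= m)%N by apply: leq_trans (ltnW hab) hbm.
by rewrite !inordK ?ltnS ?leqW // ham hbm.
Qed.

Lemma wprob_glue (R : comNzRingType) (p : R) x :
  wprob p (glue x) = wprob p x.1 * col_prob p x.2.
Proof.
rewrite !wprob_pair /col_prob big_ord_recr /=.
rewrite [X in _ * X]big1 => [|j]; last by rewrite ltnNge leq_ord.
rewrite mulr1 -big_split; apply: eq_bigr => i _ /=.
rewrite big_mkcond big_ord_recr /= -big_mkcond /= ltn_ord ffunE /= eqxx ltn_ord inord_val.
congr (_ * _); apply: eq_bigr => j _; rewrite ffunE /=.
have /negbTE -> : widen_ord (leqnSn m.+1) j != ord_max by rewrite -val_eqE /= neq_ltn ltn_ord.
by rewrite !leq_ord /= !inord_val.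
Qed.

End Glue.

Lemma valid_weights0 (w : weights 0) : valid_weights w = (w == [ffun => false]).
Proof.
apply/idP/eqP => [hv|->]; last by apply/forallP => e; rewrite ffunE implybT.
by apply/ffunP => -[i j]; rewrite ffunE (ord1 i) (ord1 j) (valid_weights_nonedge hv).
Qed.

Lemma sum_wprob_expect (R : comNzRingType) (p : R) m (phi : nweights -> R) :
  \sum_(w : weights m | valid_weights w) wprob p w * phi (nat_weights w) = expect p m phi.
Proof.
elim: m phi => [|m IH] phi.
  rewrite (big_pred1 [ffun => false]) => [|w]; last by rewrite valid_weights0.
  rewrite /= /wprob big_pred0 => [|[i j]]; last by rewrite (ord1 i) (ord1 j).
  rewrite mul1r; congr phi; apply: functional_extensionality => a.
  by apply: functional_extensionality => -[|b]; rewrite /nat_weights ?ffunE ?andbF.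
rewrite (reindex_onto (@glue m) (@unglue m)) => [|w hv]; last exact: unglueK.
rewrite (eq_bigl (fun x => valid_weights x.1)) => [|x]; last by rewrite valid_glue glueK eqxx andbT.
rewrite (eq_bigr (fun x => wprob p x.1 * (col_prob p x.2 * phi (extend (nat_weights x.1) m x.2))));
  last by move=> x _; rewrite wprob_glue nat_weights_glue mulrA.
transitivity (\sum_(w : weights m | valid_weights w) \sum_(c : {ffun 'I_m.+1 -> bool})
    wprob p w * (col_prob p c * phi (extend (nat_weights w) m c))).
  by rewrite pair_big_dep; apply: eq_bigl => x; rewrite andbT.
by rewrite /= -IH; apply: eq_bigr => w _; rewrite mulr_sumr.
Qed.

Lemma EX_Eheight (R : comNzRingType) (p : R) m : EX p m = Eheight p m.
Proof. by rewrite /EX /Eheight -sum_wprob_expect; apply: eq_bigr => w _; rewrite Xmax_height. Qed.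

Section GeneratingFunction.
Context {R : fieldType} (p : R).

Definition renewal_cumsum : fps R := fun n => \sum_(t < n.+1) renewal_prob p t.

Lemma fps_mul_1subX_cumsum : fps_mul (fps_1subX R) renewal_cumsum = renewal_prob p.
Proof.
apply: functional_extensionality => -[|n]; rewrite fps_mul_1subX /renewal_cumsum.
  by rewrite big_ord1.
by rewrite big_ord_recr /= addrC addrK.
Qed.

Lemma fps_mul_B_renewal : fps_mul (Bcoef p) (renewal_prob p) = fun _ => 1.
Proof. exact/functional_extensionality/renewal_equation. Qed.

Lemma fps_mul_1subX_1 : fps_mul (fps_1subX R) (fun _ => 1) = fps_one R.
Proof. by apply: functional_extensionality => -[|n]; rewrite fps_mul_1subX ?subrr. Qed.

Definition denominator : fps R := fps_mul (fps_mul (fps_1subX R) (fps_1subX R)) (Bcoef p).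

Lemma denominator0 : denominator 0%N = 1.
Proof.
rewrite /denominator /fps_mul !big_ord1 /fps_sub /fps_one /fps_X /Bcoef /=.
by rewrite subr0 !mul1r bin_small // expr0.
Qed.

Lemma denominator_mul_cumsum n : fps_mul denominator renewal_cumsum n = fps_one R n.
Proof.
rewrite /denominator !fps_mulA -(fps_mulA (fps_1subX R) (Bcoef p)).
rewrite (fps_mulC (fps_1subX R) (Bcoef p)) (fps_mulA (Bcoef p)).
by rewrite fps_mul_1subX_cumsum fps_mul_B_renewal fps_mul_1subX_1.
Qed.

End GeneratingFunction.

Theorem theorem2 (R : realFieldType) (p : R) (hp0 : 0 < p) (hp1 : p < 1) :
  forall n : nat,
    gcoef p n =
    fps_add (fps_one R)
      (fps_mul (fps_X R)
         (fps_inv (fps_mul (fps_mul (fps_sub (fps_one R) (fps_X R))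
                                    (fps_sub (fps_one R) (fps_X R)))
                           (Bcoef p)))) n.
Proof.
move=> [|m]; rewrite /fps_add fps_mul_X /fps_one ?addr0 // add0r.
rewrite (fps_inv_eq (denominator0 p) (denominator_mul_cumsum p)).
by rewrite /= EX_Eheight one_add_Eheight.
Qed.
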